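(* Let $G$ be a finite group, $p$ a prime dividing $|G|$, $P\in\mathrm{Syl}_p(G)$ and $\Omega=\Omega_1(Z(P))$. If $C\le P$ is fully centralized, then $C\Omega\le P$ is fully centralized and $C_P(C\Omega)=C_P(C)$.
   Context: $\Omega_1(H)$ is the subgroup generated by the elements of order $p$ of $H$. A subgroup $Q\le P$ is fully centralized if $C_P(Q)$ is a Sylow $p$-subgroup of $C_G(Q)$ (equivalently, $|C_P(Q^g)|\le|C_P(Q)|$ for all $g\in G$ with $Q^g\le P$). *)

From mathcomp Require Import all_boot all_fingroup all_solvable.
Set Implicit Arguments.
Unset Strict Implicit.
Unset Printing Implicit Defensive.
Local Open Scope group_scope.

Definition fully_centralized (gT : finGroupType) (p : nat) (G P : {group gT}) (Q : {set gT}) : bool :=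
  'C_P(Q)%G \in 'Syl_p('C_G(Q)).

From mathcomp Require Import all_boot all_fingroup all_solvable.
Local Open Scope group_scope.

(* The only property of Omega_1(Z(P)) that matters is that P centralizes it.
   Then C_P(C Omega) = C_P(C), and C_P(C) <= C_G(C Omega) <= C_G(C); a Sylow
   p-subgroup of C_G(C) lying in the smaller group C_G(C Omega) is Sylow
   there too. *)

Section CentralFactor.

Variables (gT : finGroupType) (P Q Z : {group gT}).
Hypothesis cPZ : P \subset 'C(Z).

Lemma subcent_mulg_central : 'C_P(Q * Z) = 'C_P(Q).
Proof. by rewrite centM setIA; apply/setIidPl; rewrite subIset ?cPZ. Qed.

Lemma fully_centralized_mulg_central p (G : {group gT}) :
  fully_centralized p G P Q -> fully_centralized p G P (Q * Z).
Proof.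
rewrite /fully_centralized !inE /= subcent_mulg_central => sylQ.
have defCQZ : 'C_G(Q * Z) = 'C_G(Q) :&: 'C(Z) by rewrite centM setIA.
apply: (pHall_subl _ _ sylQ) => /=; rewrite defCQZ ?subsetIl //.
by rewrite subsetI (pHall_sub sylQ) subIset ?cPZ.
Qed.

End CentralFactor.

Theorem lemma5p11 (gT : finGroupType) (G P C : {group gT}) (p : nat) :
  prime p -> p %| #|G| -> P \in 'Syl_p(G) ->
  C \subset P -> fully_centralized p G P C ->
  [/\ group_set (C * 'Ohm_1('Z(P))), C * 'Ohm_1('Z(P)) \subset P,
      fully_centralized p G P (C * 'Ohm_1('Z(P)))
    & 'C_P(C * 'Ohm_1('Z(P))) = 'C_P(C)].
Proof.
move=> _ _ _ sCP fcC.
have sOZ : 'Ohm_1('Z(P)) \subset 'Z(P) := Ohm_sub 1 _.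
have cPO : P \subset 'C('Ohm_1('Z(P))) by rewrite centsC (subset_trans sOZ) ?subsetIr.
split.
- by apply/comm_group_setP/centC; apply: subset_trans sCP cPO.
- by rewrite mul_subG // (subset_trans sOZ) ?center_sub.
- exact: fully_centralized_mulg_central.
- exact: subcent_mulg_central.
Qed.
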